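(* Assume $x_r$ is in the range of $S$. There exists an index $j$ such that $\frac{1}{y_j}|e_j^TSz_j|\ge\omega\|z_j\|$ for some global constant $\omega>0$ that only depends on $S$ and $n$.
   Context: Let $C\in\mathbb{R}^{n\times n}$ be symmetric with zero diagonal, $y\in\mathbb{R}^n$ a positive vector, and $S=C+\mathrm{diag}(y)$. Consider the Gauss-Seidel method on $\min_x x^TSx$, which cyclically minimizes over each coordinate: starting from $x_r=z_1$, for $i=1,\ldots,n$ the vector $z_{i+1}$ equals $z_i$ except in coordinate $i$, where $(z_{i+1})_i=-\frac{1}{y_i}\sum_{j}c_{ij}(z_i)_j$; then $x_{r+1}=z_{n+1}$. Here $e_j$ is the $j$-th standard basis vector and $\|\cdot\|$ the Euclidean norm. *)

From HB Require Import structures.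
From mathcomp Require Import all_boot all_order all_algebra.
Set Implicit Arguments. Unset Strict Implicit. Unset Printing Implicit Defensive.
Import Order.TTheory GRing.Theory Num.Theory.
Local Open Scope ring_scope.

Definition Smat (R : pzRingType) (n : nat) (C : 'M[R]_n) (y : 'I_n -> R) : 'M[R]_n :=
  C + diag_mx (\row_i y i).

Definition vnorm (R : rcfType) (n : nat) (v : 'cV[R]_n) : R :=
  Num.sqrt (\sum_(i < n) v i 0 ^+ 2).

Definition gs_step (R : fieldType) (n : nat) (C : 'M[R]_n) (y : 'I_n -> R)
  (k : nat) (z : 'cV[R]_n) : 'cV[R]_n :=
  \col_i (if (i : nat) == k then - (y i)^-1 * \sum_j C i j * z j 0 else z i 0).

(* gs_iter x k = z_{k+1} in the paper's 1-indexed notation: z_1 = x_r and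
   z_{i+1} is obtained from z_i by updating coordinate i. *)
Fixpoint gs_iter (R : fieldType) (n : nat) (C : 'M[R]_n) (y : 'I_n -> R)
  (x : 'cV[R]_n) (k : nat) : 'cV[R]_n :=
  match k with
  | 0 => x
  | k'.+1 => gs_step C y k' (gs_iter C y x k')
  end.

From HB Require Import structures.
From mathcomp Require Import all_boot all_order all_algebra.
Set Implicit Arguments.
Unset Strict Implicit.
Unset Printing Implicit Defensive.

Import Order.TTheory GRing.Theory Num.Theory.
Local Open Scope ring_scope.

(* Write f_i := (S z_i)_i / y_i (gs_delta i), so that the sweep is
   z_{i+1} = z_i - f_i e_i and hence (S x)_i = y_i f_i + sum_{j<i} S_ij f_j:
   the sup-norm of S x is controlled by m := max_i |f_i|.  Since S is
   symmetric, S is injective on its range, so for x in the range of S the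
   sup-norm of x is in turn controlled by that of S x.  Thus every
   z_i = x - sum_{j<i} f_j e_j has norm O(m), and the index j attaining m
   witnesses the claim. *)

Lemma ord_argmax (R : realDomainType) n (F : 'I_n -> R) (i0 : 'I_n) :
  exists i, forall k, F k <= F i.
Proof.
have [i _ Fi_max] := @arg_maxP _ _ _ i0 predT F isT.
by exists i => k; apply: Fi_max.
Qed.

Lemma ler_sum_term (R : realDomainType) n (F : 'I_n -> R) i :
  (forall k, 0 <= F k) -> F i <= \sum_k F k.
Proof. by move=> F_ge0; rewrite (bigD1 i) //= lerDl sumr_ge0. Qed.

Lemma symmetric_range_supnorm_bound (R : realFieldType) n (S : 'M[R]_n) :
  S^T = S ->
  exists2 K : R, 0 <= K &
    forall (w : 'cV_n) (M : R), (forall i, `|(S *m (S *m w)) i 0| <= M) ->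
      forall i, `|(S *m w) i 0| <= K * M.
Proof.
move=> ST; set P := pinvmx S; set K := \sum_i \sum_k `|P k i|.
have K_ge0 : 0 <= K by apply: sumr_ge0 => i _; apply: sumr_ge0.
exists K => // w M SxM i.
set x := S *m w.
have [jx x_max] := ord_argmax (fun k => `|x k 0|) i.
set Mx := `|x jx 0|.
(* x^T = w^T S^T lies in the row space of S, on which pinvmx S inverts S. *)
have vS : x^T *m P *m S = x^T by apply: mulmxKpV; rewrite trmx_mul ST submxMl.
have sq_sum : \sum_k x k 0 ^+ 2 = \sum_k (x^T *m P) 0 k * (S *m x) k 0.
  transitivity ((x^T *m x) 0 0).
    by rewrite mxE; apply: eq_bigr => k _; rewrite [x^T _ _]mxE expr2.
  by rewrite -{1}vS -mulmxA mxE.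
have v_bound k : `|(x^T *m P) 0 k| <= Mx * \sum_l `|P l k|.
  rewrite mxE big_distrr /=; apply: le_trans (ler_norm_sum _ _ _) _.
  by apply: ler_sum => l _; rewrite normrM mxE ler_wpM2r.
have Mx_sq : Mx * Mx <= Mx * (K * M).
  apply: (@le_trans _ _ (\sum_k x k 0 ^+ 2)).
    rewrite -expr2 real_normK ?num_real //.
    by apply: ler_sum_term => k; apply: sqr_ge0.
  rewrite sq_sum; apply: le_trans (ler_norm _) _.
  apply: le_trans (ler_norm_sum _ _ _) _.
  apply: (@le_trans _ _ (\sum_k (Mx * \sum_l `|P l k|) * M)).
    by apply: ler_sum => k _; rewrite normrM ler_pM.
  by rewrite -big_distrl -big_distrr mulrA.
have M_ge0 : 0 <= M by apply: le_trans (SxM i).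
have Mx_le : Mx <= K * M.
  have [->|Mx_neq0] := eqVneq Mx 0; first by rewrite mulr_ge0.
  by rewrite -(ler_pM2l (_ : 0 < Mx)) // lt_def Mx_neq0 normr_ge0.
exact: le_trans (x_max i) Mx_le.
Qed.

Section GaussSeidelSweep.

Variables (R : fieldType) (n : nat) (C : 'M[R]_n) (y : 'I_n -> R).

Lemma Smat_mulmx_row (v : 'cV_n) i :
  (Smat C y *m v) i 0 = \sum_j C i j * v j 0 + y i * v i 0.
Proof. by rewrite /Smat mulmxDl mul_diag_mx !mxE. Qed.

Variable x : 'cV[R]_n.

Definition gs_delta (i : 'I_n) : R :=
  (y i)^-1 * (Smat C y *m gs_iter C y x i) i 0.

Hypothesis y_neq0 : forall i, y i != 0.

Lemma gs_iterS_delta (k i : 'I_n) :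
  gs_iter C y x k.+1 i 0 =
  gs_iter C y x k i 0 - (if i == k then gs_delta k else 0).
Proof.
rewrite /= /gs_step mxE; case: eqP => [/val_inj->|ik]; last first.
  by rewrite ifN ?subr0 //; apply: contra_not_neq ik => ->.
rewrite eqxx /gs_delta Smat_mulmx_row mulrDr mulrA mulVf // mul1r.
by rewrite opprD addrCA subrr addr0 mulNr.
Qed.

Lemma gs_iter_delta k : (k <= n)%N -> forall i,
  gs_iter C y x k i 0 = x i 0 - (if (i < k)%N then gs_delta i else 0).
Proof.
elim: k => [|k IHk] lt_kn i; first by rewrite subr0.
rewrite -[k.+1]/(Ordinal lt_kn).+1 gs_iterS_delta /= (IHk (ltnW lt_kn)) ltnS.
have [->|ne_ik] := eqVneq i (Ordinal lt_kn).
  by rewrite /= ltnn leqnn subr0.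
rewrite subr0 [(i <= k)%N]leq_eqVlt.
by move: ne_ik; rewrite -val_eqE /= => /negbTE->.
Qed.

Lemma Smat_mulmx_delta i :
  (Smat C y *m x) i 0 =
  y i * gs_delta i
  + \sum_j Smat C y i j * (if (j < i)%N then gs_delta j else 0).
Proof.
rewrite /gs_delta mulrA mulfV // mul1r !mxE.
under [X in _ = X + _]eq_bigr => j _ do
  rewrite (gs_iter_delta (ltnW (ltn_ord i))) mulrBr.
by rewrite sumrB subrK.
Qed.

End GaussSeidelSweep.

Lemma Smat_mulmx_bound_gs_delta (R : realFieldType) n
    (C : 'M[R]_n) (y : 'I_n -> R) :
  (forall i, 0 < y i) ->
  exists2 K : R, 0 <= K &
    forall (x : 'cV_n) (m : R), (forall j, `|gs_delta C y x j| <= m) ->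
      forall i, `|(Smat C y *m x) i 0| <= K * m.
Proof.
move=> y_gt0; set S := Smat C y.
have row_ge0 i : 0 <= y i + \sum_j `|S i j|.
  by rewrite addr_ge0 ?sumr_ge0 // ltW.
exists (\sum_i (y i + \sum_j `|S i j|)) => [|x m delta_le i].
  exact: sumr_ge0.
have m_ge0 : 0 <= m by apply: le_trans (delta_le i).
rewrite Smat_mulmx_delta => [|j]; last by rewrite gt_eqF.
apply: le_trans (ler_normD _ _) _.
apply: (@le_trans _ _ ((y i + \sum_j `|S i j|) * m)); last first.
  by rewrite ler_wpM2r // (ler_sum_term (F := fun k => y k + \sum_j `|S k j|)).
rewrite mulrDl normrM gtr0_norm // lerD //; first by rewrite ler_wpM2l // ltW.
rewrite big_distrl /=; apply: le_trans (ler_norm_sum _ _ _) _.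
apply: ler_sum => j _; rewrite normrM ler_wpM2l //.
by case: ifP; rewrite ?normr0.
Qed.

Lemma vnorm_le_entrywise (R : rcfType) n (v : 'cV[R]_n) (b : R) :
  0 <= b -> (forall i, `|v i 0| <= b) -> vnorm v <= n%:R * b.
Proof.
move=> b_ge0 v_le; rewrite /vnorm -(ger0_norm (mulr_ge0 (ler0n _ n) b_ge0)).
rewrite -sqrtr_sqr ler_wsqrtr //.
apply: (@le_trans _ _ (\sum_(i < n) b ^+ 2)).
  apply: ler_sum => i _; rewrite -real_normK ?num_real //.
  by rewrite lerXn2r ?nnegrE.
rewrite sumr_const card_ord exprMn -(mulr_natl (b ^+ 2)) ler_wpM2r ?sqr_ge0 //.
rewrite expr2 -natrM ler_nat; have [->|n_gt0] := posnP n => //.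
exact: leq_pmull.
Qed.

Theorem lemma12 (R : rcfType) (n : nat) (C : 'M[R]_n) (y : 'I_n -> R) :
  (0 < n)%N ->
  C^T = C ->
  (forall i, C i i = 0) ->
  (forall i, 0 < y i) ->
  exists omega : R, 0 < omega /\
    forall x : 'cV[R]_n, (exists w : 'cV[R]_n, x = Smat C y *m w) ->
      exists j : 'I_n,
        (y j)^-1 * `|(Smat C y *m gs_iter C y x j) j 0|
          >= omega * vnorm (gs_iter C y x j).
Proof.
move=> n_gt0 CT _ y_gt0.
have y_neq0 i : y i != 0 by rewrite gt_eqF.
have ST : (Smat C y)^T = Smat C y by rewrite /Smat linearD /= CT tr_diag_mx.
have [K1 K1_ge0 x_bound] := symmetric_range_supnorm_bound ST.
have [K2 K2_ge0 Sx_bound] := Smat_mulmx_bound_gs_delta C y_gt0.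
set K := K1 * K2 + 1.
have K_gt0 : 0 < K by rewrite ltr_wpDl ?mulr_ge0.
have nK_gt0 : 0 < n%:R * K by rewrite mulr_gt0 ?ltr0n.
exists (n%:R * K)^-1; split=> [|x [w x_def]]; first by rewrite invr_gt0.
have [j delta_max] := ord_argmax (fun i => `|gs_delta C y x i|) (Ordinal n_gt0).
set m := `|gs_delta C y x j|.
have m_ge0 : 0 <= m := normr_ge0 _.
exists j.
have -> : (y j)^-1 * `|(Smat C y *m gs_iter C y x j) j 0| = m.
  by rewrite /m /gs_delta normrM gtr0_norm ?invr_gt0.
rewrite ler_pdivrMl // -mulrA.
apply: vnorm_le_entrywise; first by rewrite mulr_ge0 // ltW.
move=> i; rewrite (gs_iter_delta C x y_neq0 (ltnW (ltn_ord j))).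
apply: le_trans (ler_normB _ _) _.
rewrite /K mulrDl mul1r -mulrA lerD //.
  by rewrite x_def; apply: x_bound => k; rewrite -x_def; apply: Sx_bound.
by case: ifP; rewrite ?normr0.
Qed.
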